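(* There exists a constant $T^*>0$ such that every arc $\mathcal Z$ of a billiard trajectory in $D$ with winding number $k\in\mathbb{Z}\setminus\{0\}$ and endpoints $\mathcal Z(t_0)=(x_0,-L)$, $\mathcal Z(t_1)=(x_1,-L)\in\ell'$ has travel time $|t_1-t_0|\le T^*$; that is, the travel time is bounded uniformly in $x_0$, $x_1$ and $k$.
   Context: Fix $L,h,\beta>0$; $V_\beta(z)=-\frac1{|z|}-\frac{\beta}{|z|^2}$; $\ell=\{y=-L\}$, $\mathcal P=\{y>-L\}$. Winding number of an arc $u$ from $\ell$ to $\ell$ in $\mathcal P\setminus\{0\}$ in between: winding number around $0$ of $u$ concatenated with the oriented segment from its final to its initial point. $\hat{\mathcal Z}$ is a fixed solution of $\ddot z=-\nabla V_\beta(z)$ at energy $h$ ($\frac12|\dot z|^2+V_\beta(z)=h$) meeting $\ell$ at times $\tau_0<\tau_1$, in $\mathcal P$ on $(\tau_0,\tau_1)$, of winding number $1$, with the angle between $\dot{\hat{\mathcal Z}}(\tau_0)$ and $(1,0)$ less than $\pi/2$ and that between $(-1,0)$ and $\dot{\hat{\mathcal Z}}(\tau_1)$ greater than $\pi/2$; $\ell'$ is the segment of $\ell$ between $\hat{\mathcal Z}(\tau_0),\hat{\mathcal Z}(\tau_1)$ and $D$ the compact region bounded by $\hat{\mathcal Z}([\tau_0,\tau_1])$ and $\ell'$. An arc of a billiard trajectory is a collision-free solution of the equations of motion at energy $h$ between two consecutive hits of $\ell$. *)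

From Stdlib Require Export Reals ZArith.
From Coquelicot Require Export Coquelicot.
Open Scope R_scope.

Definition pnorm (p : R * R) : R := sqrt (fst p ^ 2 + snd p ^ 2).

Definition Vbeta (beta : R) (p : R * R) : R := - / pnorm p - beta / (pnorm p ^ 2).

Definition minus_gradV_x (beta : R) (p : R * R) : R :=
  - fst p / (pnorm p ^ 3) - 2 * beta * fst p / (pnorm p ^ 4).
Definition minus_gradV_y (beta : R) (p : R * R) : R :=
  - snd p / (pnorm p ^ 3) - 2 * beta * snd p / (pnorm p ^ 4).

Definition is_solution (beta h : R) (x y vx vy : R -> R) (a b : R) : Prop :=
  forall t, a <= t <= b ->
    (x t, y t) <> (0, 0) /\
    is_derive x t (vx t) /\ is_derive y t (vy t) /\
    is_derive vx t (minus_gradV_x beta (x t, y t)) /\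
    is_derive vy t (minus_gradV_y beta (x t, y t)) /\
    / 2 * (vx t ^ 2 + vy t ^ 2) + Vbeta beta (x t, y t) = h.

Definition close_arc (x y : R -> R) (a b : R) (t : R) : R * R :=
  if Rle_dec t b then (x t, y t)
  else ((1 - (t - b)) * x b + (t - b) * x a, (1 - (t - b)) * y b + (t - b) * y a).

(* winding number of the curve g on [a,b] (assumed closed) around the point p equals k:
   g avoids p and there is a continuous lift theta of the angle of g - p with
   theta b - theta a = 2 pi k. *)
Definition winding_about (g : R -> R * R) (a b : R) (p : R * R) (k : Z) : Prop :=
  a <= b /\
  (forall t, a <= t <= b -> g t <> p) /\
  exists theta : R -> R,
    (forall t, a <= t <= b -> continuous theta t) /\
    (forall t, a <= t <= b ->
       let d := (fst (g t) - fst p, snd (g t) - snd p) in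
       fst d = pnorm d * cos (theta t) /\ snd d = pnorm d * sin (theta t)) /\
    theta b - theta a = 2 * PI * IZR k.

Definition arc_winding (x y : R -> R) (a b : R) (k : Z) : Prop :=
  winding_about (close_arc x y a b) a (b + 1) (0, 0) k.

(* The compact region bounded by the arc (x,y)([a,b]) and the segment of l joining its
   endpoints: the closed curve itself together with the points around which it has
   nonzero winding number. *)
Definition bounded_region (x y : R -> R) (a b : R) (p : R * R) : Prop :=
  (exists t, a <= t <= b + 1 /\ close_arc x y a b t = p) \/
  (exists k : Z, k <> 0%Z /\ winding_about (close_arc x y a b) a (b + 1) p k).

Definition angle (u w : R * R) : R :=
  acos ((fst u * fst w + snd u * snd w) / (pnorm u * pnorm w)).

Definition in_lseg (L x0 x1 : R) (p : R * R) : Prop :=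
  snd p = - L /\ Rmin x0 x1 <= fst p <= Rmax x0 x1.

(* The moment of inertia I = |z|^2 / 2 of a solution of energy h satisfies the
   Lagrange-Jacobi identity I'' = |z'|^2 + z.z'' = 2 h + 1/|z| >= 2 h, so I is
   uniformly convex.  Comparing I at the endpoints with I at the midpoint of
   [t0, t1] gives h (t1 - t0)^2 <= |z(t0)|^2 + |z(t1)|^2, and the endpoints lie on
   the bounded segment l'.  Neither the winding number nor the region D plays
   any role. *)
From Stdlib Require Import Lra Psatz.

Lemma MVT_closed (f df : R -> R) (a b : R) :
  a < b -> (forall t, a <= t <= b -> is_derive f t (df t)) ->
  exists c, a <= c <= b /\ f b - f a = df c * (b - a).
Proof.
  intros Hab Hf.
  assert (Hab_min : Rmin a b = a) by (apply Rmin_left; lra).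
  assert (Hab_max : Rmax a b = b) by (apply Rmax_right; lra).
  destruct (MVT_gen f a b df) as [c [Hc E]]; rewrite ?Hab_min, ?Hab_max in *.
  - intros t Ht; apply Hf; lra.
  - intros t Ht; apply continuity_pt_filterlim.
    apply (ex_derive_continuous (K := R_AbsRing) (V := R_NormedModule)).
    exists (df t); apply Hf; exact Ht.
  - exists c; split; assumption.
Qed.

Lemma derive_nonneg_le (f df : R -> R) (a b s t : R) :
  (forall u, a <= u <= b -> is_derive f u (df u)) ->
  (forall u, a <= u <= b -> 0 <= df u) ->
  a <= s -> s <= t -> t <= b -> f s <= f t.
Proof.
  intros Hf Hdf Has Hst Htb.
  destruct (Req_dec s t) as [-> | Hneq]; [lra |].
  destruct (MVT_closed f df s t) as [c [Hc E]]; [lra | intros u Hu; apply Hf; lra |].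
  assert (0 <= df c) by (apply Hdf; lra).
  nra.
Qed.

Lemma convex_midpoint (g dg ddg : R -> R) (a b : R) :
  a < b ->
  (forall t, a <= t <= b -> is_derive g t (dg t)) ->
  (forall t, a <= t <= b -> is_derive dg t (ddg t)) ->
  (forall t, a <= t <= b -> 0 <= ddg t) ->
  2 * g ((a + b) / 2) <= g a + g b.
Proof.
  intros Hab Hg Hdg Hddg.
  set (m := (a + b) / 2).
  destruct (MVT_closed g dg a m) as [c1 [Hc1 E1]];
    [unfold m; lra | intros t Ht; apply Hg; unfold m in *; lra |].
  destruct (MVT_closed g dg m b) as [c2 [Hc2 E2]];
    [unfold m; lra | intros t Ht; apply Hg; unfold m in *; lra |].
  assert (dg c1 <= dg c2)
    by (apply (derive_nonneg_le dg ddg a b _ _ Hdg Hddg); unfold m in *; lra).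
  assert (m - a = b - m) by (unfold m; lra).
  nra.
Qed.

Lemma uniformly_convex_midpoint (g dg ddg : R -> R) (a b c : R) :
  a < b ->
  (forall t, a <= t <= b -> is_derive g t (dg t)) ->
  (forall t, a <= t <= b -> is_derive dg t (ddg t)) ->
  (forall t, a <= t <= b -> c <= ddg t) ->
  c * (b - a) ^ 2 / 4 <= g a + g b - 2 * g ((a + b) / 2).
Proof.
  intros Hab Hg Hdg Hddg.
  assert (Hc := convex_midpoint (fun t => g t - c / 2 * t ^ 2) (fun t => dg t - c * t)
                  (fun t => ddg t - c) a b Hab).
  cbv beta in Hc.
  enough (2 * (g ((a + b) / 2) - c / 2 * ((a + b) / 2) ^ 2)
          <= g a - c / 2 * a ^ 2 + (g b - c / 2 * b ^ 2)) by nra.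
  apply Hc.
  - intros t Ht; apply (is_derive_minus g (fun t => c / 2 * t ^ 2)); [now apply Hg |].
    auto_derive; [exact I | field].
  - intros t Ht; apply (is_derive_minus dg (fun t => c * t)); [now apply Hdg |].
    auto_derive; [exact I | ring].
  - intros t Ht; specialize (Hddg t Ht); lra.
Qed.

Lemma is_derive_dot (x y u w : R -> R) (t dx dy du dw : R) :
  is_derive x t dx -> is_derive y t dy -> is_derive u t du -> is_derive w t dw ->
  is_derive (fun s => x s * u s + y s * w s) t (dx * u t + x t * du + (dy * w t + y t * dw)).
Proof.
  intros Hx Hy Hu Hw.
  exact (is_derive_plus _ _ t _ _ (is_derive_mult x u t dx du Hx Hu Rmult_comm)
                                  (is_derive_mult y w t dy dw Hy Hw Rmult_comm)).
Qed.

Lemma pnorm_pos (p : R * R) : p <> (0, 0) -> 0 < pnorm p.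
Proof.
  destruct p as [X Y]; intro Hnz; apply sqrt_lt_R0; simpl.
  destruct (Req_dec X 0) as [-> | HX]; [destruct (Req_dec Y 0) as [-> | HY] |].
  - now exfalso.
  - nra.
  - nra.
Qed.

Lemma pnorm_sqr (p : R * R) : pnorm p ^ 2 = fst p ^ 2 + snd p ^ 2.
Proof. unfold pnorm; rewrite pow2_sqrt; [reflexivity | nra]. Qed.

Lemma lagrange_jacobi_identity (beta h X Y VX VY : R) :
  (X, Y) <> (0, 0) ->
  / 2 * (VX ^ 2 + VY ^ 2) + Vbeta beta (X, Y) = h ->
  VX * VX + X * minus_gradV_x beta (X, Y) + (VY * VY + Y * minus_gradV_y beta (X, Y))
  = 2 * h + / pnorm (X, Y).
Proof.
  intros Hnz HE.
  assert (Hr := pnorm_pos _ Hnz); assert (Hr2 := pnorm_sqr (X, Y)).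
  unfold Vbeta, minus_gradV_x, minus_gradV_y in *; simpl fst in *; simpl snd in *.
  set (r := pnorm (X, Y)) in *.
  assert (Hvirial : X * (- X / r ^ 3 - 2 * beta * X / r ^ 4) + Y * (- Y / r ^ 3 - 2 * beta * Y / r ^ 4)
                    = - / r - 2 * beta / r ^ 2).
  { replace (X * (- X / r ^ 3 - 2 * beta * X / r ^ 4) + Y * (- Y / r ^ 3 - 2 * beta * Y / r ^ 4))
      with (- (X ^ 2 + Y ^ 2) / r ^ 3 - 2 * beta * (X ^ 2 + Y ^ 2) / r ^ 4) by (field; lra).
    rewrite <- Hr2; field; lra. }
  rewrite <- HE; lra.
Qed.

Lemma solution_travel_time_sqr_le (beta h : R) (x y vx vy : R -> R) (t0 t1 : R) :
  t0 < t1 -> is_solution beta h x y vx vy t0 t1 ->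
  h * (t1 - t0) ^ 2 <= x t0 ^ 2 + y t0 ^ 2 + (x t1 ^ 2 + y t1 ^ 2).
Proof.
  intros Ht Hsol.
  set (ax t := minus_gradV_x beta (x t, y t)); set (ay t := minus_gradV_y beta (x t, y t)).
  assert (Hgap := uniformly_convex_midpoint
    (fun t => / 2 * (x t * x t + y t * y t))
    (fun t => x t * vx t + y t * vy t)
    (fun t => vx t * vx t + x t * ax t + (vy t * vy t + y t * ay t))
    t0 t1 (2 * h) Ht).
  cbv beta in Hgap.
  set (m := (t0 + t1) / 2) in Hgap.
  enough (2 * h * (t1 - t0) ^ 2 / 4 <= / 2 * (x t0 * x t0 + y t0 * y t0)
            + / 2 * (x t1 * x t1 + y t1 * y t1) - 2 * (/ 2 * (x m * x m + y m * y m)))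
    by nra.
  apply Hgap; intros t Hti; destruct (Hsol t Hti) as (Hnz & Hx & Hy & Hvx & Hvy & HE).
  - replace (x t * vx t + y t * vy t)
      with (/ 2 * (vx t * x t + x t * vx t + (vy t * y t + y t * vy t))) by field.
    apply (is_derive_scal (fun s => x s * x s + y s * y s)), is_derive_dot; assumption.
  - apply is_derive_dot; assumption.
  - unfold ax, ay; rewrite (lagrange_jacobi_identity beta h _ _ _ _ Hnz HE).
    assert (0 < pnorm (x t, y t)) by now apply pnorm_pos.
    assert (0 < / pnorm (x t, y t)) by now apply Rinv_0_lt_compat.
    lra.
Qed.

Lemma in_lseg_sqr_le (L a b : R) (p : R * R) :
  in_lseg L a b p -> fst p ^ 2 <= a ^ 2 + b ^ 2.
Proof.
  intros [_ Hp]; unfold Rmin, Rmax in Hp.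
  destruct (Rle_dec a b); destruct Hp as [Hlo Hhi];
    assert (Hchord : fst p ^ 2 <= (a + b) * fst p - a * b) by nra;
    destruct (Rle_dec 0 (a + b)); nra.
Qed.

Theorem proposition3p6
  (L h beta : R) (HL : 0 < L) (Hh : 0 < h) (Hbeta : 0 < beta)
  (* the fixed solution Zhat = (xh, yh) with velocity (vxh, vyh) *)
  (xh yh vxh vyh : R -> R) (tau0 tau1 : R)
  (Htau : tau0 < tau1)
  (Hsol : is_solution beta h xh yh vxh vyh tau0 tau1)
  (Hl0 : yh tau0 = - L) (Hl1 : yh tau1 = - L)
  (HP : forall t, tau0 < t < tau1 -> yh t > - L)
  (Hwind : arc_winding xh yh tau0 tau1 1%Z)
  (Hang0 : angle (vxh tau0, vyh tau0) (1, 0) < PI / 2)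
  (Hang1 : angle (-1, 0) (vxh tau1, vyh tau1) > PI / 2) :
  exists Tstar : R, 0 < Tstar /\
    forall (x y vx vy : R -> R) (t0 t1 x0 x1 : R) (k : Z),
      (* an arc of a billiard trajectory: collision-free solution at energy h
         between two consecutive hits of l *)
      t0 < t1 ->
      is_solution beta h x y vx vy t0 t1 ->
      (x t0, y t0) = (x0, - L) -> (x t1, y t1) = (x1, - L) ->
      (forall t, t0 < t < t1 -> y t > - L) ->
      (* endpoints in l' *)
      in_lseg L (xh tau0) (xh tau1) (x0, - L) ->
      in_lseg L (xh tau0) (xh tau1) (x1, - L) ->
      (* the arc lies in D *)
      (forall t, t0 <= t <= t1 -> bounded_region xh yh tau0 tau1 (x t, y t)) ->
      (* winding number k <> 0 *)
      k <> 0%Z -> arc_winding x y t0 t1 k ->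
      Rabs (t1 - t0) <= Tstar.
Proof.
  set (A := xh tau0 ^ 2 + xh tau1 ^ 2).
  assert (HA : 0 <= A) by (unfold A; nra).
  exists (sqrt (2 * (A + L ^ 2) / h)); split.
  { apply sqrt_lt_R0, Rdiv_lt_0_compat; nra. }
  intros x y vx vy t0 t1 x0 x1 k Ht Hs E0 E1 _ S0 S1 _ _ _.
  injection E0 as Ex0 Ey0; injection E1 as Ex1 Ey1.
  assert (Hbound := solution_travel_time_sqr_le beta h x y vx vy t0 t1 Ht Hs).
  rewrite Ex0, Ey0, Ex1, Ey1 in Hbound.
  assert (B0 := in_lseg_sqr_le _ _ _ _ S0); assert (B1 := in_lseg_sqr_le _ _ _ _ S1).
  simpl fst in B0, B1; fold A in B0, B1.
  rewrite Rabs_right, <- (sqrt_pow2 (t1 - t0)) by lra.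
  apply sqrt_le_1_alt, (Rmult_le_reg_l h); [exact Hh |].
  replace (h * (2 * (A + L ^ 2) / h)) with (2 * (A + L ^ 2)) by (field; lra).
  nra.
Qed.
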